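(* For every forward trie $\mathsf{T}_f$ with $n$ nodes, over any alphabet, the suffix tree $\mathsf{STree}(\mathsf{T}_f)$ has $O(n^2)$ nodes and $O(n^2)$ edges. Moreover, there exist forward tries $\mathsf{T}_f$ with $n$ nodes, for arbitrarily large $n$ and over an alphabet of constant size, such that $\mathsf{STree}(\mathsf{T}_f)$ has $\Omega(n^2)$ nodes and $\Omega(n^2)$ edges.
   Context: An alphabet $\Sigma$ is a finite ordered set of characters, and $\sigma=|\Sigma|$. A forward trie $\mathsf{T}_f$ is a rooted tree with $n$ nodes in which every edge is directed from parent to child and labeled by a single character of $\Sigma$, such that the edges leaving any node carry pairwise distinct labels. For nodes $u,v$ with $u$ an ancestor of $v$ (possibly $u=v$), $\mathrm{str}_f(u,v)$ is the string of labels read along the downward path from $u$ to $v$. Define $\mathrm{Suffix}(\mathsf{T}_f)=\{\mathrm{str}_f(u,\ell): \ell \text{ a leaf},\ u \text{ an ancestor of } \ell\}$. For a finite set $S$ of strings, its compact tree is obtained from the trie of all prefixes of strings in $S$ (one node per prefix, the root being the empty string, an edge labeled $a$ from $X$ to $Xa$) by deleting every non-root node that has exactly one child and merging its two incident edges into one edge labeled by the concatenation of their labels. The suffix tree $\mathsf{STree}(\mathsf{T}_f)$ is the compact tree of $\mathrm{Suffix}(\mathsf{T}_f)$. *)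

From mathcomp Require Import all_boot.
Set Implicit Arguments. Unset Strict Implicit. Unset Printing Implicit Defensive.

Section Tries.
Variable Sigma : finType.
Notation word := (seq Sigma).

(* A forward trie is represented (up to isomorphism) by the duplicate-free
   list of the strings read from the root to each of its nodes: the root is
   the empty string, and the set is closed under taking prefixes.  Edge
   labels out of a node are automatically pairwise distinct. The number of
   nodes is [size T]. *)
Definition is_trie (T : seq word) : Prop :=
  [/\ uniq T, [::] \in T & forall s, s \in T -> forall k, take k s \in T].

Definition sprefix (x y : word) : bool := prefix x y && (size x < size y).

Definition trie_leaves (T : seq word) : seq word :=
  [seq l <- T | ~~ has (sprefix l) T].

(* Suffix(T_f) = { str_f(u, l) : l leaf, u ancestor of l };
   for node strings u = take k l, str_f(u,l) = drop k l. *)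
Definition trie_suffixes (T : seq word) : seq word :=
  [seq drop k l | l <- trie_leaves T, k <- iota 0 (size l).+1].

(* all prefixes of strings of S: the nodes of the (uncompacted) trie of S *)
Definition prefixes (S : seq word) : seq word :=
  undup [seq take k s | s <- S, k <- iota 0 (size s).+1].

Definition nchildren (S : seq word) (x : word) : nat :=
  #|[pred a : Sigma | rcons x a \in prefixes S]|.

Definition ctree_nodes (S : seq word) : seq word :=
  [seq x <- prefixes S | (x == [::]) || (nchildren S x != 1)].

Definition ctree_edges (S : seq word) : seq (word * word) :=
  [seq p <- [seq (x, y) | x <- ctree_nodes S, y <- ctree_nodes S] |
     sprefix p.1 p.2 &&
     ~~ has (fun z => sprefix p.1 z && sprefix z p.2) (ctree_nodes S)].

Definition stree_nodes (T : seq word) : nat := size (ctree_nodes (trie_suffixes T)).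
Definition stree_edges (T : seq word) : nat := size (ctree_edges (trie_suffixes T)).

End Tries.

From mathcomp Require Import all_boot zify.
Set Implicit Arguments. Unset Strict Implicit.

(* Upper bound: a node of STree(T_f) is a prefix [take k (drop j l)] of a
   suffix, i.e. the string [drop |u| v] with [u = take j l] and
   [v = take (j + k) l] both nodes of T_f, so there are at most n^2 of them;
   the compact tree is a tree, so it has fewer edges than nodes.
   Lower bound: hang a leaf labelled c below every node of the path
   a^k b^k.  For 1 <= i <= k and 1 <= j < k the suffixes a^i b^j c and
   a^i b^(j+1) c show that a^i b^j branches, so STree has at least k(k-1)
   nodes and k(k-1) - 1 edges, while the trie has at most 4k + 2 nodes. *)

Section CompactTree.
Variable Sigma : finType.
Notation word := (seq Sigma).
Implicit Types (S T : seq word) (x y : word).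

Lemma take_size_prefix x y : prefix x y -> take (size x) y = x.
Proof. by rewrite prefixE => /eqP. Qed.

Lemma mem_prefixes_take S s k : s \in S -> take k s \in prefixes S.
Proof.
move=> sS; rewrite /prefixes mem_undup; apply/allpairsPdep.
case: (leqP k (size s)) => hk; first by exists s, k; rewrite mem_iota.
exists s, (size s); rewrite mem_iota take_size take_oversize; last exact: ltnW.
by split=> //; rewrite add0n ltnSn.
Qed.

Lemma prefixesP S z :
  reflect (exists s k, s \in S /\ z = take k s) (z \in prefixes S).
Proof.
apply: (iffP idP) => [|[s [k [sS ->]]]]; last exact: mem_prefixes_take.
by rewrite /prefixes mem_undup => /allpairsPdep [s [k [sS _ ->]]]; exists s, k.
Qed.

Lemma mem_prefixes_cat S u v : u ++ v \in S -> u \in prefixes S.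
Proof. by move=> uvS; rewrite -(take_size_cat v (erefl (size u))) mem_prefixes_take. Qed.

Lemma mem_ctree_nodes_branch S x a b :
  a != b -> rcons x a \in prefixes S -> rcons x b \in prefixes S ->
  x \in ctree_nodes S.
Proof.
move=> neq_ab xaS xbS; rewrite mem_filter; apply/andP; split.
  apply/orP; right; rewrite /nchildren (cardD1 a) (cardD1 b) !inE.
  by rewrite [b == a]eq_sym neq_ab xaS xbS /=.
move/prefixesP: xaS => [s [k [sS xa_def]]].
have -> : x = take (size x) (take k s) by rewrite -xa_def -cats1 take_size_cat.
by rewrite -take_min mem_prefixes_take.
Qed.

Lemma ctree_nodes_uniq S : uniq (ctree_nodes S).
Proof. exact/filter_uniq/undup_uniq. Qed.

Lemma ctree_edges_uniq S : uniq (ctree_edges S).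
Proof.
apply/filter_uniq/allpairs_uniq; try exact: ctree_nodes_uniq.
by move=> [? ?] [? ?] _ _ /= ->.
Qed.

Lemma size_ctree_nodes_le_prefixes S : size (ctree_nodes S) <= size (prefixes S).
Proof. by rewrite size_filter count_size. Qed.

Lemma mem_ctree_edges S x y :
  (x, y) \in ctree_edges S =
  [&& sprefix x y, ~~ has (fun z => sprefix x z && sprefix z y) (ctree_nodes S),
      x \in ctree_nodes S & y \in ctree_nodes S].
Proof.
rewrite mem_filter -andbA.
have -> : ((x, y) \in [seq (u, v) | u <- ctree_nodes S, v <- ctree_nodes S]) =
    (x \in ctree_nodes S) && (y \in ctree_nodes S).
  by apply/allpairsP/andP => [[[? ?] [/= ? ? [-> ->]]] | [? ?]]; last exists (x, y).
by [].
Qed.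

Lemma ctree_edges_parent_uniq S x x' y :
  (x, y) \in ctree_edges S -> (x', y) \in ctree_edges S -> x = x'.
Proof.
have no_longer_parent x1 x2 : (x1, y) \in ctree_edges S ->
    (x2, y) \in ctree_edges S -> size x1 < size x2 -> False.
  rewrite !mem_ctree_edges => /and4P [/andP [px1 _] no_mid _ _].
  move=> /and4P [/andP [px2 sx2] _ x2C _] lt12.
  move/hasP: no_mid; apply; exists x2 => //.
  rewrite /sprefix px2 sx2 lt12 !andbT prefixE.
  rewrite -{1}(take_size_prefix px2) -take_min (minn_idPl (ltnW lt12)).
  by rewrite take_size_prefix.
move=> e1 e2; case: (ltngtP (size x) (size x')) => cmp.
- by case: (no_longer_parent _ _ e1 e2 cmp).
- by case: (no_longer_parent _ _ e2 e1 cmp).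
move: e1 e2; rewrite !mem_ctree_edges => /and4P [/andP [px _] _ _ _].
move=> /and4P [/andP [px' _] _ _ _].
by rewrite -(take_size_prefix px) -(take_size_prefix px') cmp.
Qed.

Lemma size_ctree_edges_le S : size (ctree_edges S) <= size (ctree_nodes S).
Proof.
rewrite -(size_map snd); apply: uniq_leq_size.
  rewrite map_inj_in_uniq ?ctree_edges_uniq // => -[x y] [x' y'] e e' /= eq_y.
  by subst y'; rewrite (ctree_edges_parent_uniq e e').
by move=> y /mapP [[x y'] + ->]; rewrite mem_ctree_edges => /and4P [].
Qed.

(* Every node other than the root is the child of its longest proper prefix
   among the compact nodes, which is well defined since the root is one. *)
Lemma size_ctree_nodes_le S : size (ctree_nodes S) <= (size (ctree_edges S)).+1.
Proof.
set C := ctree_nodes S.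
have root_in y : y \in C -> [::] \in C.
  rewrite mem_filter => /andP [_] /prefixesP [s [k [sS _]]].
  by rewrite mem_filter eqxx -(take0 s) mem_prefixes_take.
have root_count : count (pred1 [::]) C <= 1.
  by rewrite count_uniq_mem ?ctree_nodes_uniq ?leq_b1.
have non_root_count : count (predC (pred1 [::])) C <= size (ctree_edges S).
  rewrite -size_filter -(size_map snd (ctree_edges S)).
  apply: uniq_leq_size; first exact/filter_uniq/ctree_nodes_uniq.
  move=> y; rewrite mem_filter /= => /andP [y_nil yC].
  have ex_prefix : exists i, (i < size y) && (take i y \in C).
    by exists 0; rewrite take0 (root_in _ yC) andbT lt0n size_eq0.
  have bounded i : (i < size y) && (take i y \in C) -> i <= size y.
    by case/andP => /ltnW.
  have [m /andP [m_lt mC] m_max] := ex_maxnP ex_prefix bounded.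
  apply/mapP; exists (take m y, y) => //.
  rewrite mem_ctree_edges mC yC !andbT /sprefix prefix_take size_take m_lt m_lt /=.
  apply/hasP => -[z zC /andP [/andP [_ m_lt_z] /andP [pzy z_lt]]].
  have : size z <= m by apply: m_max; rewrite z_lt take_size_prefix.
  by rewrite leqNgt m_lt_z.
by rewrite -(count_predC (pred1 [::]) C) -addn1 addnC leq_add.
Qed.

Lemma mem_suffixes_drop T l k :
  l \in trie_leaves T -> drop k l \in trie_suffixes T.
Proof.
move=> lL; apply/allpairsPdep.
case: (leqP k (size l)) => hk; first by exists l, k; rewrite mem_iota.
exists l, (size l); rewrite mem_iota drop_size drop_oversize; last exact: ltnW.
by split=> //; rewrite add0n ltnSn.
Qed.

Lemma size_prefixes_suffixes T :
  is_trie T -> size (prefixes (trie_suffixes T)) <= size T ^ 2.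
Proof.
move=> [_ _ take_closed].
rewrite -mulnn -(size_allpairs (fun u v : word => drop (size u) v) T T).
apply: uniq_leq_size; first exact: undup_uniq.
move=> z /prefixesP [s [k [/allpairsPdep [l [j [lL _ ->]]] ->]]].
have lT : l \in T by move: lL; rewrite mem_filter => /andP [].
apply/allpairsP; exists (take j l, take (k + j) l).
split; rewrite ?take_closed //= take_drop size_take.
case: ltnP => // l_le_j.
by rewrite take_oversize ?drop_oversize // (leq_trans l_le_j) ?leq_addl.
Qed.

Lemma stree_nodes_le_sq T : is_trie T -> stree_nodes T <= size T ^ 2.
Proof.
by move=> trT; apply: leq_trans (size_ctree_nodes_le_prefixes _) (size_prefixes_suffixes trT).
Qed.

Lemma stree_edges_le_sq T : is_trie T -> stree_edges T <= size T ^ 2.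
Proof. by move=> trT; apply: leq_trans (size_ctree_edges_le _) (stree_nodes_le_sq trT). Qed.

Lemma stree_nodes_le_edges T : stree_nodes T <= (stree_edges T).+1.
Proof. exact: size_ctree_nodes_le. Qed.

End CompactTree.

Section Comb.
Local Notation letter := (option bool).
Local Notation a := (Some false).
Local Notation b := (Some true).
Local Notation c := (@None bool).
Variable k : nat.

Definition comb_spine : seq letter := nseq k a ++ nseq k b.

Definition comb_trie : seq (seq letter) :=
  undup ([seq take t comb_spine | t <- iota 0 (2 * k).+1] ++
         [seq rcons (take t comb_spine) c | t <- iota 0 (2 * k).+1]).

Lemma size_comb_spine : size comb_spine = 2 * k.
Proof. by rewrite size_cat !size_nseq addnn mul2n. Qed.

Lemma comb_trieP s : reflect (exists2 t, t <= 2 * k &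
    s = take t comb_spine \/ s = rcons (take t comb_spine) c) (s \in comb_trie).
Proof.
rewrite mem_undup mem_cat; apply: (iffP orP).
  by case=> /mapP [t]; rewrite mem_iota ltnS => /andP [_ ?] ->; exists t; auto.
by move=> [t ? [->|->]]; [left | right]; apply/mapP; exists t; rewrite ?mem_iota.
Qed.

Lemma size_comb_trie : size comb_trie <= 4 * k + 2.
Proof.
apply: leq_trans (size_undup _) _.
by rewrite size_cat !size_map size_iota; lia.
Qed.

Lemma comb_trie_is_trie : is_trie comb_trie.
Proof.
split; first exact: undup_uniq.
  by apply/comb_trieP; exists 0; rewrite ?take0; auto.
move=> s /comb_trieP [t le_t [->|->]] k'; apply/comb_trieP.
  by exists (minn k' t); [lia | rewrite take_min; auto].
have size_t : size (take t comb_spine) = t by rewrite size_takel ?size_comb_spine.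
case: (leqP k' t) => cmp.
  by exists k'; [lia | left; rewrite -cats1 takel_cat ?size_t // take_takel].
by exists t => //; right; rewrite take_oversize // size_rcons size_t.
Qed.

Lemma mem_comb_leaves t : t <= 2 * k -> rcons (take t comb_spine) c \in trie_leaves comb_trie.
Proof.
move=> le_t; rewrite mem_filter; apply/andP; split; last by apply/comb_trieP; exists t; auto.
have c_spine : c \notin comb_spine by rewrite mem_cat !mem_nseq !andbF.
have c_notin_take u : c \notin take u comb_spine by apply: contra c_spine; apply: mem_take.
apply/hasP => -[s /comb_trieP [t' le_t' s_def] /andP [ps lt_s]].
have c_in : c \in take (size (rcons (take t comb_spine) c)) s.
  by rewrite take_size_prefix // mem_rcons mem_head.
case: s_def lt_s c_in => ->.
  by move=> _ /mem_take; apply/negP/c_notin_take.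
rewrite !size_rcons !size_takel ?size_comb_spine // ltnS => lt_t'.
rewrite -cats1 takel_cat; last by rewrite size_takel ?size_comb_spine.
by move=> /mem_take; apply/negP/c_notin_take.
Qed.

Lemma drop_comb_leaf i j : 0 < i <= k -> j <= k ->
  drop (k - i) (rcons (take (k + j) comb_spine) c) = nseq i a ++ nseq j b ++ [:: c].
Proof.
move=> /andP [i_gt0 le_i] le_j.
rewrite take_cat size_nseq ltnNge leq_addr /= addKn take_nseq //.
rewrite -cats1 -catA drop_cat size_nseq ifT; last lia.
by rewrite drop_nseq subKn.
Qed.

Lemma comb_stree_nodes_ge : k * k.-1 <= stree_nodes comb_trie.
Proof.
rewrite -[k in k * _](size_iota 1 k) -(size_iota 1 k.-1).
rewrite -(size_allpairs (fun i j => nseq i a ++ nseq j b) (iota 1 k) (iota 1 k.-1)).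
apply: uniq_leq_size.
  apply: allpairs_uniq; rewrite ?iota_uniq // => -[i j] [i' j'] _ _ /= eq_ij.
  have := congr1 (count (pred1 a)) eq_ij; have := congr1 (count (pred1 b)) eq_ij.
  by rewrite !count_cat !count_nseq /= !mul1n !mul0n !addn0 !add0n => -> ->.
move=> x /allpairsP [[i j] [/=]]; rewrite !mem_iota => range_i range_j ->.
have suffix_in j' : j' <= k -> nseq i a ++ nseq j' b ++ [:: c] \in trie_suffixes comb_trie.
  move=> le_j'; rewrite -drop_comb_leaf; last exact: le_j'; last lia.
  by apply/mem_suffixes_drop/mem_comb_leaves; lia.
have extend_b : rcons (nseq i a ++ nseq j b) b = nseq i a ++ nseq j.+1 b.
  by rewrite rcons_cat -cats1 -[[:: b]]/(nseq 1 b) -nseqD addn1.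
apply: (@mem_ctree_nodes_branch _ _ _ b c) => //.
  rewrite extend_b; apply: (@mem_prefixes_cat _ _ _ [:: c]).
  by rewrite -catA; apply: suffix_in; lia.
rewrite -cats1 -catA; apply: (@mem_prefixes_cat _ _ _ [::]).
by rewrite cats0; apply: suffix_in; lia.
Qed.

End Comb.

Theorem theorem1 :
  (exists c : nat, forall (Sigma : finType) (T : seq (seq Sigma)),
     is_trie T ->
     stree_nodes T <= c * (size T) ^ 2 /\ stree_edges T <= c * (size T) ^ 2)
  /\
  (exists (Sigma : finType) (d : nat), 0 < d /\
     forall N : nat, exists T : seq (seq Sigma),
       [/\ is_trie T, N <= size T,
           (size T) ^ 2 <= d * stree_nodes T &
           (size T) ^ 2 <= d * stree_edges T]).
Proof.
split.
  exists 1 => Sigma T trT; rewrite !mul1n.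
  by split; [exact: stree_nodes_le_sq | exact: stree_edges_le_sq].
exists (option bool : finType), 50; split=> // N.
pose k := N + 3; exists (comb_trie k).
have trT := comb_trie_is_trie k.
have n_le := size_comb_trie k.
have m_ge := comb_stree_nodes_ge k.
have m_le := stree_nodes_le_sq trT.
have m_le_e := stree_nodes_le_edges (comb_trie k).
move: n_le m_ge m_le m_le_e; rewrite /k.
set n := size _; set m := stree_nodes _; set e := stree_edges _ => *.
(* [N <= n] holds because [k (k - 1) <= m <= n ^ 2]. *)
by split=> //; nia.
Qed.
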